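(* Let $(\gamma_n)$ be a sequence of positive reals satisfying conditions (C1)–(C7) below, let $\omega>0$ be fixed, and let $a_n,b_n$ be defined as below. Then $\operatorname{Im}(a_n)>|b_n|$ for all sufficiently large $n$.
   Context: Let $\Delta_n=\gamma_{n+1}-\gamma_n$, $\Delta^2_n=\Delta_{n+1}-\Delta_n$. Conditions: (C1) $\gamma_n\to\infty$; (C2) $\Delta_n\to0$; (C3) there exist $n_0,m_0$ with $\gamma_{n+m}>\gamma_n$ for all $n\ge n_0$, $m\ge m_0$; (C4) $\sum 1/\gamma_j=\infty$; (C5) some $\kappa>1$ has $\sum\gamma_j^{-\kappa}<\infty$; (C6) $\sum|\Delta_n|/\gamma_n^2<\infty$; (C7) $\sum|\Delta^2_n|/\gamma_n<\infty$. For $n\ge1$, $a_n=-\frac{\omega^2}{2\gamma_{2n-1}\gamma_{2n}}+\frac{\gamma_{2n-1}}{2\gamma_{2n}}+\frac{\gamma_{2n-2}}{2\gamma_{2n-1}}+i\left(\frac{\omega}{2\gamma_{2n-1}}+\frac{\omega\gamma_{2n-2}}{2\gamma_{2n-1}\gamma_{2n}}\right)$, $b_n=\frac{\omega^2}{2\gamma_{2n-1}\gamma_{2n}}-\frac{\gamma_{2n-1}}{2\gamma_{2n}}+\frac{\gamma_{2n-2}}{2\gamma_{2n-1}}+i\left(-\frac{\omega}{2\gamma_{2n-1}}+\frac{\omega\gamma_{2n-2}}{2\gamma_{2n-1}\gamma_{2n}}\right)$. *)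

From Stdlib Require Import Reals Lra.
From Coquelicot Require Import Coquelicot.
Open Scope R_scope.

Definition Delta (gamma : nat -> R) (n : nat) : R := gamma (S n) - gamma n.
Definition Delta2 (gamma : nat -> R) (n : nat) : R := Delta gamma (S n) - Delta gamma n.

Definition cond_C1 (gamma : nat -> R) : Prop := is_lim_seq gamma p_infty.
Definition cond_C2 (gamma : nat -> R) : Prop := is_lim_seq (Delta gamma) 0.
Definition cond_C3 (gamma : nat -> R) : Prop :=
  exists n0 m0 : nat, forall n m : nat, (n0 <= n)%nat -> (m0 <= m)%nat ->
    gamma (n + m)%nat > gamma n.
Definition cond_C4 (gamma : nat -> R) : Prop :=
  is_lim_seq (sum_n (fun j => / gamma j)) p_infty.
Definition cond_C5 (gamma : nat -> R) : Prop :=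
  exists kappa : R, kappa > 1 /\ ex_series (fun j => Rpower (gamma j) (- kappa)).
Definition cond_C6 (gamma : nat -> R) : Prop :=
  ex_series (fun n => Rabs (Delta gamma n) / (gamma n) ^ 2).
Definition cond_C7 (gamma : nat -> R) : Prop :=
  ex_series (fun n => Rabs (Delta2 gamma n) / gamma n).

(* a_n and b_n for n >= 1 (indices 2n-1, 2n-2 use truncated nat subtraction,
   meaningful for n >= 1) *)
Definition a_seq (gamma : nat -> R) (omega : R) (n : nat) : C :=
  let g1 := gamma (2 * n - 1)%nat in
  let g2 := gamma (2 * n)%nat in
  let g0 := gamma (2 * n - 2)%nat in
  (- omega ^ 2 / (2 * g1 * g2) + g1 / (2 * g2) + g0 / (2 * g1),
   omega / (2 * g1) + omega * g0 / (2 * g1 * g2)).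

Definition b_seq (gamma : nat -> R) (omega : R) (n : nat) : C :=
  let g1 := gamma (2 * n - 1)%nat in
  let g2 := gamma (2 * n)%nat in
  let g0 := gamma (2 * n - 2)%nat in
  (omega ^ 2 / (2 * g1 * g2) - g1 / (2 * g2) + g0 / (2 * g1),
   - omega / (2 * g1) + omega * g0 / (2 * g1 * g2)).

(* Writing g0, g1, g2 for gamma_{2n-2}, gamma_{2n-1}, gamma_{2n}, one computes
   (Im a_n)^2 - |b_n|^2 = (4 w^2 g0 g2 - (w^2 - g1^2 + g0 g2)^2) / (4 g1^2 g2^2).
   By (C2) neighbouring terms eventually differ by at most w/4, so
   |w^2 - g1^2 + g0 g2| <= w^2 + g1 w/2 + w^2/16, while by (C1) g1 is eventually
   large and then 2 w sqrt(g0 g2) >= 2 w (g1 - w/4) dominates that bound. Only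
   (C1) and (C2) are needed. *)
From Stdlib Require Import Reals Lra Lia Psatz.
From Coquelicot Require Import Coquelicot.
Open Scope R_scope.

Lemma Cmod_lt_of_sq_lt (x y z : R) : 0 < z -> x ^ 2 + y ^ 2 < z ^ 2 -> Cmod (x, y) < z.
Proof.
  intros Hz H. unfold Cmod; simpl.
  rewrite <- (sqrt_pow2 z) by lra.
  apply sqrt_lt_1_alt. split; [nra | exact H].
Qed.

Lemma Cmod_b_lt_Im_a (w g0 g1 g2 : R) :
  0 < w -> 0 < g0 -> 0 < g1 -> 0 < g2 ->
  (w ^ 2 - g1 ^ 2 + g0 * g2) ^ 2 < 4 * w ^ 2 * g0 * g2 ->
  Cmod (w ^ 2 / (2 * g1 * g2) - g1 / (2 * g2) + g0 / (2 * g1),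
        - w / (2 * g1) + w * g0 / (2 * g1 * g2))
  < w / (2 * g1) + w * g0 / (2 * g1 * g2).
Proof.
  intros Hw H0 H1 H2 Hdisc.
  apply Cmod_lt_of_sq_lt.
  - apply Rplus_lt_0_compat; apply Rdiv_lt_0_compat; nra.
  - assert (Hdiff :
      (w / (2 * g1) + w * g0 / (2 * g1 * g2)) ^ 2
      - ((w ^ 2 / (2 * g1 * g2) - g1 / (2 * g2) + g0 / (2 * g1)) ^ 2
         + (- w / (2 * g1) + w * g0 / (2 * g1 * g2)) ^ 2)
      = (4 * w ^ 2 * g0 * g2 - (w ^ 2 - g1 ^ 2 + g0 * g2) ^ 2) / (4 * g1 ^ 2 * g2 ^ 2)).
    { field; split; lra. }
    assert (0 < (4 * w ^ 2 * g0 * g2 - (w ^ 2 - g1 ^ 2 + g0 * g2) ^ 2)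
                / (4 * g1 ^ 2 * g2 ^ 2)).
    { apply Rdiv_lt_0_compat; [lra |].
      pose proof (Rmult_lt_0_compat _ _ H1 H2). nra. }
    lra.
Qed.

Lemma discriminant_pos_of_close_neighbours (w g0 g1 g2 : R) :
  0 < w -> 2 * w < g1 ->
  Rabs (g1 - g0) <= w / 4 -> Rabs (g2 - g1) <= w / 4 ->
  (w ^ 2 - g1 ^ 2 + g0 * g2) ^ 2 < 4 * w ^ 2 * g0 * g2.
Proof.
  intros Hw Hg1 H10 H21.
  apply Rabs_le_between in H10; apply Rabs_le_between in H21.
  set (m := g1 - w / 4).
  assert (Hm : 0 < m) by (unfold m; lra).
  assert (Hmm : m * m <= g0 * g2) by (apply Rmult_le_compat; unfold m in *; lra).
  assert (Habs : Rabs (w ^ 2 - g1 ^ 2 + g0 * g2) < 2 * w * m).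
  { apply Rabs_def1; unfold m; nra. }
  assert ((w ^ 2 - g1 ^ 2 + g0 * g2) ^ 2 < (2 * w * m) ^ 2).
  { rewrite <- pow2_abs. pose proof (Rabs_pos (w ^ 2 - g1 ^ 2 + g0 * g2)). nra. }
  nra.
Qed.

Lemma eventually_S (P : nat -> Prop) : eventually P -> eventually (fun n => P (S n)).
Proof. exact (eventually_subseq S (fun n => Nat.lt_succ_diag_r (S n)) P). Qed.

Lemma eventually_gt_of_C1 (gamma : nat -> R) (M : R) :
  cond_C1 gamma -> eventually (fun n => M < gamma n).
Proof. intros C1. exact (proj2 (is_lim_seq_spec _ _) C1 M). Qed.

Lemma eventually_Delta_le_of_C2 (gamma : nat -> R) (eps : R) :
  cond_C2 gamma -> 0 < eps -> eventually (fun n => Rabs (gamma (S n) - gamma n) <= eps).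
Proof.
  intros C2 Heps.
  destruct (proj2 (is_lim_seq_spec _ _) C2 (mkposreal eps Heps)) as [N HN].
  exists N. intros n Hn. specialize (HN n Hn). simpl in HN.
  unfold Delta in HN. rewrite Rminus_0_r in HN. apply Rlt_le, HN.
Qed.

Lemma eventually_close_neighbours (gamma : nat -> R) (w : R) :
  cond_C1 gamma -> cond_C2 gamma -> 0 < w ->
  eventually (fun k => 2 * w < gamma (S k)
    /\ Rabs (gamma (S k) - gamma k) <= w / 4
    /\ Rabs (gamma (S (S k)) - gamma (S k)) <= w / 4).
Proof.
  intros C1 C2 Hw.
  assert (Hdelta := eventually_Delta_le_of_C2 gamma (w / 4) C2 ltac:(lra)).
  apply filter_and.
  - exact (eventually_S (fun n => 2 * w < gamma n) (eventually_gt_of_C1 gamma _ C1)).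
  - apply filter_and; [exact Hdelta |].
    exact (eventually_S (fun n => Rabs (gamma (S n) - gamma n) <= w / 4) Hdelta).
Qed.

Theorem corollary9 (gamma : nat -> R) (omega : R) :
  (forall n : nat, 0 < gamma n) ->
  cond_C1 gamma -> cond_C2 gamma -> cond_C3 gamma -> cond_C4 gamma -> cond_C5 gamma -> cond_C6 gamma -> cond_C7 gamma ->
  0 < omega ->
  exists N : nat, forall n : nat, (1 <= n)%nat -> (N <= n)%nat ->
    Im (a_seq gamma omega n) > Cmod (b_seq gamma omega n).
Proof.
  intros Hpos C1 C2 _ _ _ _ _ Hw.
  destruct (eventually_close_neighbours gamma omega C1 C2 Hw) as [N HN].
  exists (S N). intros n Hn HNn.
  unfold a_seq, b_seq.
  remember (2 * n - 2)%nat as k eqn:Ek.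
  replace (2 * n - 1)%nat with (S k) by lia.
  replace (2 * n)%nat with (S (S k)) by lia.
  destruct (HN k ltac:(lia)) as [Hg1 [H10 H21]].
  apply Cmod_b_lt_Im_a; auto.
  apply discriminant_pos_of_close_neighbours; assumption.
Qed.
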